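(* Let $w\in\mathcal S_n$ and $a\in\mathrm R(w)$ with $a\notin[a_{\min}]$. Then there exists $b\in\mathrm R(w)$ such that $[b]$ and $[a]$ are adjacent in $C(w)$ (some word of $[b]$ and some word of $[a]$ differ by a single long braid relation) and $\mathrm{sup}(b)\subsetneq\mathrm{sup}(a)$. Similarly, if $a\notin[a_{\max}]$, there exists $b\in\mathrm R(w)$ with $[b]$ adjacent to $[a]$ in $C(w)$ and $\mathrm{sup}(a)\subsetneq\mathrm{sup}(b)$.
   Context: Permutations are in one-line notation; $\mathrm{Des}(u)=\{i:u_i>u_{i+1}\}$. A word $a=a_1\cdots a_\ell$ with letters in $\{1,\dots,n-1\}$ acts on a word of length $n$ by successively swapping the entries in positions $a_j$ and $a_j+1$. $\mathrm R(w)$: reduced words of $w$ (length $\ell(w)$ = number of inversions, action on $12\cdots n$ yields $w$). Commutation: replace a factor $ij$, $|i-j|\ge2$, by $ji$; long braid relation: replace $i(i+1)i$ by $(i+1)i(i+1)$ or vice versa; $[a]$ is the commutation class of $a$. $C(w)$: vertices are commutation classes, $[a]\ne[b]$ adjacent if some $a'\in[a]$, $b'\in[b]$ differ by one long braid relation. $a_{\min}$ (resp. $a_{\max}$): set $w^0=w$, for $j=0,\dots,\ell(w)-1$ let $i_j$ be the smallest (resp. largest) element of $\mathrm{Des}(w^j)$ and obtain $w^{j+1}$ by swapping the entries in positions $i_j,i_j+1$ of $w^j$; the word is $i_{\ell(w)-1}\cdots i_0$. For an inversion $(p,q)$ of $w$, $P_a(p,q)$ is the index of the step of $a$ swapping $p$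 and $q$. $\mathrm T_w$: triples $(x,y,z)$, $x<y<z$, with $z,y,x$ in this order in $w$. $\Gamma(a,(x,y,z))=1$ if $P_a(y,x)>P_a(z,y)$, else $0$. $\mathrm{sup}(a)=\{t\in\mathrm T_w:\Gamma(a,t)=1\}$. *)

(* permutations and words are represented as seq nat,
   positions and letters are 1-indexed as in the paper. *)
From Stdlib Require Import Relations.
From mathcomp Require Import all_boot.
Set Implicit Arguments. Unset Strict Implicit. Unset Printing Implicit Defensive.

(* w is a permutation of {1..n} in one-line notation *)
Definition is_perm (n : nat) (w : seq nat) : Prop := perm_eq w (iota 1 n).

(* swap the entries in positions i and i+1 (1-indexed) *)
Definition swap_at (i : nat) (u : seq nat) : seq nat :=
  set_nth 0 (set_nth 0 u i.-1 (nth 0 u i)) i (nth 0 u i.-1).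

Definition act (a : seq nat) (u : seq nat) : seq nat :=
  foldl (fun v i => swap_at i v) u a.

Definition ninv (w : seq nat) : nat :=
  sumn [seq ((i < j) && (nth 0 w j < nth 0 w i) : nat)
       | i <- iota 0 (size w), j <- iota 0 (size w)].

Definition reduced (n : nat) (w a : seq nat) : Prop :=
  all (fun i => (1 <= i) && (i <= n.-1)) a /\
  size a = ninv w /\ act a (iota 1 n) = w.

Definition comm_step (a b : seq nat) : Prop :=
  exists x y i j, ((i + 2 <= j) || (j + 2 <= i)) /\
    a = x ++ [:: i; j] ++ y /\ b = x ++ [:: j; i] ++ y.

Definition comm_eq : seq nat -> seq nat -> Prop := clos_refl_trans _ comm_step.

Definition braid_step (a b : seq nat) : Prop :=
  exists x y i,
    (a = x ++ [:: i; i.+1; i] ++ y /\ b = x ++ [:: i.+1; i; i.+1] ++ y) \/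
    (a = x ++ [:: i.+1; i; i.+1] ++ y /\ b = x ++ [:: i; i.+1; i] ++ y).

Definition adjacent (a b : seq nat) : Prop :=
  ~ comm_eq a b /\
  exists a' b', comm_eq a a' /\ comm_eq b b' /\ braid_step a' b'.

(* descent set Des(u) (1-indexed, increasing) *)
Definition des (u : seq nat) : seq nat :=
  [seq i <- iota 1 (size u).-1 | nth 0 u i < nth 0 u i.-1].

Fixpoint sort_steps (pick : seq nat -> nat) (fuel : nat) (u : seq nat)
  : seq nat :=
  match fuel with
  | 0 => [::]
  | f.+1 => let i := pick (des u) in i :: sort_steps pick f (swap_at i u)
  end.

(* a_min = i_{l-1} ... i_0 with i_j the smallest descent of w^j *)
Definition amin (w : seq nat) : seq nat :=
  rev (sort_steps (head 0) (ninv w) w).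
Definition amax (w : seq nat) : seq nat :=
  rev (sort_steps (last 0) (ninv w) w).

Fixpoint steps (a : seq nat) (u : seq nat) : seq (nat * nat) :=
  match a with
  | [::] => [::]
  | i :: a' => (nth 0 u i.-1, nth 0 u i) :: steps a' (swap_at i u)
  end.

(* P_a(p,q): (0-based) index of the step of a swapping p and q,
   when a acts on 12...n *)
Definition P (n : nat) (a : seq nat) (p q : nat) : nat :=
  find (fun pr => (pr == (p, q)) || (pr == (q, p))) (steps a (iota 1 n)).

Definition Tw (w : seq nat) : seq (nat * nat * nat) :=
  [seq t <- flatten [seq [seq (x, y, z) | y <- w, z <- w] | x <- w] |
     let: (x, y, z) := t in
     [&& x < y, y < z, index z w < index y w & index y w < index x w]].

Definition Gamma (n : nat) (a : seq nat) (t : nat * nat * nat) : bool :=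
  let: (x, y, z) := t in P n a z y < P n a y x.

Definition sup (n : nat) (w a : seq nat) : seq (nat * nat * nat) :=
  [seq t <- Tw w | Gamma n a t].

Definition strict_subset (s1 s2 : seq (nat * nat * nat)) : Prop :=
  {subset s1 <= s2} /\ ~ {subset s2 <= s1}.

Set Warnings "-notation-overridden".
From Stdlib Require Import Relations.
From mathcomp Require Import all_boot zify.
Set Implicit Arguments. Unset Strict Implicit. Unset Printing Implicit Defensive.

(* A word is reduced iff each of its letters swaps an ascent of the current
   sequence.  Commutations preserve this and swap the same pairs of entries in
   a different order, which does not affect Gamma; so sup is an invariant of
   commutation classes.
   The last letter of a_min is the leftmost descent d of w.  Removing the last
   letter of a reduced word a of w shows that either some word of [a] ends with
   d, or [a] contains a factor (d+1) d (d+1); by induction on the length, [a] is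
   [a_min] unless such a braid factor occurs (dually, a factor i (i+1) i for
   a_max).  If the letters of (i+1) i (i+1) act on entries A < B < C, replacing
   it by i (i+1) i reverses the order in which the pairs {B,C}, {A,C}, {A,B}
   are swapped: Gamma changes on the single triple (A,B,C) of T_w, which
   leaves sup. *)

(** * Adjacent transpositions and reduced words *)

Lemma nth_swap_at i u k : nth 0 (swap_at i u) k =
  if k == i then nth 0 u i.-1 else if k == i.-1 then nth 0 u i else nth 0 u k.
Proof. by rewrite /swap_at !nth_set_nth /= nth_set_nth. Qed.

Lemma nth_swap_at_hi i u : nth 0 (swap_at i u) i = nth 0 u i.-1.
Proof. by rewrite nth_swap_at eqxx. Qed.

Lemma nth_swap_at_lo i u : 0 < i -> nth 0 (swap_at i u) i.-1 = nth 0 u i.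
Proof. by move=> i_gt0; rewrite nth_swap_at eqxx; case: eqP => //; lia. Qed.

Lemma nth_swap_at_other i u k : k <> i -> k <> i.-1 ->
  nth 0 (swap_at i u) k = nth 0 u k.
Proof. by move=> ki ki'; rewrite nth_swap_at; do 2 case: eqP => //. Qed.

Lemma size_swap_at i u : 0 < i < size u -> size (swap_at i u) = size u.
Proof. by move=> i_in; rewrite /swap_at !size_set_nth; lia. Qed.

Lemma swap_atK i u : 0 < i < size u -> swap_at i (swap_at i u) = u.
Proof.
move=> i_in; apply: (@eq_from_nth _ 0); first by rewrite !size_swap_at ?size_swap_at.
move=> k _; rewrite !nth_swap_at.
case: (k =P i) => [->|ki]; first by rewrite eqxx; case: (i.-1 =P i) => //; lia.
by case: (k =P i.-1) => [->|//]; rewrite eqxx.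
Qed.

Lemma swap_at_cat l p q r : swap_at (size l).+1 (l ++ p :: q :: r) = l ++ q :: p :: r.
Proof. by elim: l => [|x l IH] //=; rewrite -IH; case: (size l). Qed.

Lemma swap_at_split u i : 0 < i < size u -> exists l r,
  size l = i.-1 /\ u = l ++ nth 0 u i.-1 :: nth 0 u i :: r.
Proof.
move=> /andP[i_gt0 i_lt]; exists (take i.-1 u), (drop i.+1 u); split.
  by rewrite size_take; case: ifP => //; lia.
rewrite -{1}(cat_take_drop i.-1 u) (drop_nth 0); last by lia.
by rewrite prednK // (drop_nth 0).
Qed.

Lemma perm_swap_at i u : 0 < i < size u -> perm_eq (swap_at i u) u.
Proof.
move=> i_in; have [l [r [sl ->]]] := swap_at_split i_in.
have -> : i = (size l).+1 by lia.
by rewrite swap_at_cat perm_cat2l; apply/permP => f /=; lia.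
Qed.

Lemma act_cat a b u : act (a ++ b) u = act b (act a u).
Proof. by rewrite /act foldl_cat. Qed.

Lemma steps_cat a b u : steps (a ++ b) u = steps a u ++ steps b (act a u).
Proof. by elim: a u => [|i a IH] u //=; rewrite IH. Qed.

Fixpoint reduced_on (u : seq nat) (a : seq nat) : bool :=
  if a is i :: a' then
    [&& 0 < i, i < size u, nth 0 u i.-1 < nth 0 u i & reduced_on (swap_at i u) a']
  else true.

Lemma reduced_on_cat u a b :
  reduced_on u (a ++ b) = reduced_on u a && reduced_on (act a u) b.
Proof. by elim: a u => [|i a IH] u //=; rewrite IH !andbA. Qed.

Lemma reduced_on_range u a : reduced_on u a -> all (fun i => 0 < i < size u) a.
Proof.
elim: a u => [|i a IH] u //= /and4P[i_gt0 i_lt _ red].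
by rewrite i_gt0 i_lt /=; move: (IH _ red); rewrite size_swap_at ?i_gt0.
Qed.

Lemma reduced_on_perm u a : reduced_on u a -> perm_eq (act a u) u.
Proof.
elim: a u => [|i a IH] u //= /and4P[i_gt0 i_lt _ red].
by apply: perm_trans (IH _ red) _; apply: perm_swap_at; rewrite i_gt0.
Qed.

Lemma reduced_on_uniq u a : reduced_on u a -> uniq u -> uniq (act a u).
Proof. by move=> /reduced_on_perm/perm_uniq ->. Qed.

Lemma ninvE w : ninv w = sumn [seq count (fun j => (i < j) && (nth 0 w j < nth 0 w i))
                                     (iota 0 (size w)) | i <- iota 0 (size w)].
Proof.
rewrite /ninv sumn_flatten -map_comp; congr sumn; apply: eq_map => i /=.
by rewrite sumn_count.
Qed.

Lemma ninv_cons x s : ninv (x :: s) = count (fun y => y < x) s + ninv s.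
Proof.
have iota1 : iota 1 (size s) = map S (iota 0 (size s)).
  by rewrite -(addn0 1) iotaDl; apply: eq_map => ?; rewrite add1n.
rewrite !ninvE /= iota1 /=; congr (_ + _).
  by rewrite count_map -{3}(mkseq_nth 0 s) /mkseq count_map.
rewrite -map_comp; congr sumn; apply: eq_map => i /=.
by rewrite count_map add0n.
Qed.

Lemma ninv_iota m n : ninv (iota m n) = 0.
Proof.
elim: n m => [|n IH] m //=; rewrite ninv_cons IH addn0.
by rewrite (@eq_in_count _ _ pred0) ?count_pred0 // => y; rewrite mem_iota /=; lia.
Qed.

Lemma ninv_swap_at i u : 0 < i < size u ->
  ninv (swap_at i u) + (nth 0 u i < nth 0 u i.-1) =
  ninv u + (nth 0 u i.-1 < nth 0 u i).
Proof.
move=> i_in; have [l [r [sl E]]] := swap_at_split i_in.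
move: E; set p := nth 0 u i.-1; set q := nth 0 u i => ->.
have -> : i = (size l).+1 by lia.
rewrite swap_at_cat; elim: l {sl} => [|x l IH] /=; first by rewrite !ninv_cons /=; lia.
by rewrite !ninv_cons !count_cat /=; lia.
Qed.

Lemma ninv_act u a : all (fun i => 0 < i < size u) a ->
  ninv (act a u) <= ninv u + size a /\
  (ninv (act a u) = ninv u + size a -> reduced_on u a).
Proof.
elim: a u => [|i a IH] u /=; first by rewrite addn0.
case/andP=> i_in a_in.
have [le_n eq_red] : ninv (act a (swap_at i u)) <= ninv (swap_at i u) + size a /\
    (ninv (act a (swap_at i u)) = ninv (swap_at i u) + size a ->
     reduced_on (swap_at i u) a).
  by apply: IH; rewrite size_swap_at.
have := ninv_swap_at i_in; case/andP: (i_in) => -> -> /=.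
by case: ltngtP => /= _ ninv_step; split; lia.
Qed.

Lemma reduced_on_ninv u a : reduced_on u a -> ninv (act a u) = ninv u + size a.
Proof.
elim: a u => [|i a IH] u //=; first by rewrite addn0.
case/and4P=> i_gt0 i_lt asc red; rewrite IH //.
by have := @ninv_swap_at i u; rewrite i_gt0 i_lt asc /= ltnNge ltnW //=; lia.
Qed.

Lemma reduced_on_of_reduced n w a : reduced n w a -> reduced_on (iota 1 n) a.
Proof.
case=> letters [size_a act_a].
have a_in : all (fun i => 0 < i < size (iota 1 n)) a.
  by apply/allP => i /(allP letters); rewrite size_iota; lia.
by have [_] := ninv_act a_in; apply; rewrite act_a ninv_iota size_a.
Qed.

(** * Commutation classes *)

Lemma swap_at_commute i j v : (i + 2 <= j) || (j + 2 <= i) ->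
  swap_at i (swap_at j v) = swap_at j (swap_at i v).
Proof.
move=> far; apply: (@eq_from_nth _ 0); first by rewrite /swap_at !size_set_nth; lia.
move=> k _; rewrite !nth_swap_at.
by repeat case: eqP => ?; try (congr (nth _ _ _); lia); lia.
Qed.

Lemma reduced_on_commute i j v : (i + 2 <= j) || (j + 2 <= i) ->
  reduced_on v [:: i; j] ->
  reduced_on v [:: j; i] /\ steps [:: j; i] v = rev (steps [:: i; j] v).
Proof.
move=> far /= /and4P[i_gt0 i_lt asc_i /and4P[j_gt0 j_lt asc_j _]].
rewrite size_swap_at ?i_gt0 // in j_lt.
have [fj fj'] : j <> i /\ j <> i.-1 by lia.
have [fi fi'] : i <> j /\ i <> j.-1 by lia.
have [fj1 fj1'] : j.-1 <> i /\ j.-1 <> i.-1 by lia.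
have [fi1 fi1'] : i.-1 <> j /\ i.-1 <> j.-1 by lia.
rewrite !nth_swap_at_other // in asc_j *.
by rewrite j_gt0 j_lt asc_j size_swap_at ?j_gt0 // i_gt0 i_lt asc_i.
Qed.

Lemma comm_step_reduced_on u a b : comm_step a b -> reduced_on u a ->
  reduced_on u b /\ act a u = act b u.
Proof.
case=> x [y [i [j [far [-> ->]]]]].
rewrite !reduced_on_cat !act_cat => /and3P[red_x red_ij red_y].
have [red_ji _] := reduced_on_commute far red_ij.
have act_ij : act [:: i; j] (act x u) = act [:: j; i] (act x u).
  by rewrite /= (swap_at_commute _ far).
by rewrite -act_ij red_x red_ji red_y.
Qed.

Lemma comm_eq_reduced_on u a b : comm_eq a b -> reduced_on u a ->
  reduced_on u b /\ act a u = act b u.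
Proof.
elim=> [a' b'|//|a' b' c' _ IH1 _ IH2]; first exact: comm_step_reduced_on.
by move=> red_a; have [red_b ->] := IH1 red_a; have [red_c ->] := IH2 red_b.
Qed.

Lemma comm_eq_size a b : comm_eq a b -> size a = size b.
Proof.
elim=> [a' b' [x [y [i [j [_ [-> ->]]]]]]|//|a' b' c' _ -> _ //].
by rewrite !size_cat.
Qed.

Lemma comm_eq_catr y a b : comm_eq a b -> comm_eq (a ++ y) (b ++ y).
Proof.
elim=> [a' b' [x [z [i [j [far [-> ->]]]]]]|a'|a' b' c' _ IH1 _ IH2].
- by apply: rt_step; exists x, (z ++ y), i, j; rewrite -!catA.
- exact: rt_refl.
- exact: rt_trans IH1 IH2.
Qed.

(** * The words a_min and a_max *)

(* Satisfied by the leftmost descent of [w]; unlike that property, it passes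
   from [act [:: e] v] to [v] when [e != d]. *)
Definition prefix_max_descent (w : seq nat) d :=
  [/\ 0 < d, d < size w, nth 0 w d < nth 0 w d.-1 &
      forall j, j < d.-1 -> nth 0 w j < nth 0 w d.-1].

Lemma prefix_max_descent_iota n d : ~ prefix_max_descent (iota 1 n) d.
Proof. by case=> d_gt0; rewrite size_iota => d_lt; rewrite !nth_iota //; lia. Qed.

Lemma prefix_max_descent_swap_pred v e d : reduced_on v [:: e] ->
  prefix_max_descent (act [:: e] v) d -> d != e.+1.
Proof.
move=> /= /and4P[e_gt0 _ asc _] [_ _ _ prefix]; apply/eqP => d_def.
by have := prefix e.-1; rewrite d_def /= nth_swap_at_lo // nth_swap_at_hi; lia.
Qed.

Lemma prefix_max_descent_swap v e d : reduced_on v [:: e] ->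
  prefix_max_descent (act [:: e] v) d -> e != d -> prefix_max_descent v d.
Proof.
move=> red pmd e_ne_d; have /eqP d_ne := prefix_max_descent_swap_pred red pmd.
move: red pmd => /= /and4P[e_gt0 e_lt asc _] [d_gt0 d_lt desc prefix].
rewrite size_swap_at ?e_gt0 // in d_lt.
have w_lo := nth_swap_at_lo v e_gt0; have w_hi := nth_swap_at_hi e v.
have w_other := nth_swap_at_other v (i := e).
have top : nth 0 (swap_at e v) d.-1 = nth 0 v d.-1 by apply: w_other; lia.
split => //.
- case: (eqVneq e d.+1) => [e_def | e_ne].
    by subst e; move: desc; rewrite top /= in w_lo asc *; rewrite w_lo; lia.
  by rewrite -top -w_other //; lia.
- move=> j j_lt; rewrite -top.
  case: (eqVneq j e) => [j_e | j_ne]; first by subst j; rewrite -w_lo prefix //; lia.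
  case: (eqVneq j e.-1) => [j_e | j_ne'].
    by subst j; apply: ltn_trans asc _; rewrite -w_lo prefix //; lia.
  by rewrite -w_other ?prefix //; lia.
Qed.

Lemma prefix_max_descent_braid u d : reduced_on u [:: d; d.+1] ->
  prefix_max_descent (act [:: d; d.+1] u) d -> prefix_max_descent u d.+1.
Proof.
move=> /= /and5P[d_gt0 d_lt _ d1_lt /andP[asc _]].
rewrite size_swap_at ?d_gt0 // nth_swap_at_hi nth_swap_at_other in d1_lt asc; try lia.
have nthE k : nth 0 (swap_at d.+1 (swap_at d u)) k = nth 0 u
    (if k == d.-1 then d else if k == d then d.+1 else if k == d.+1 then d.-1 else k).
  by rewrite !nth_swap_at; repeat case: eqP => ?; try (congr (nth _ _ _); lia); lia.
rewrite /prefix_max_descent /act /= !nthE !eqxx.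
have -> : (d == d.-1) = false by lia.
case=> _ _ desc prefix; split => // j j_lt.
case: (eqVneq j d.-1) => [-> | j_ne]; first lia.
by have := prefix j; rewrite nthE (negbTE j_ne) !ifN_eq; lia.
Qed.

(* Likewise for the rightmost descent. *)
Definition suffix_min_descent (w : seq nat) d :=
  [/\ 0 < d, d < size w, nth 0 w d < nth 0 w d.-1 &
      forall j, d < j < size w -> nth 0 w d < nth 0 w j].

Lemma suffix_min_descent_iota n d : ~ suffix_min_descent (iota 1 n) d.
Proof. by case=> d_gt0; rewrite size_iota => d_lt; rewrite !nth_iota //; lia. Qed.

Lemma suffix_min_descent_swap_succ v e d : reduced_on v [:: e] ->
  suffix_min_descent (act [:: e] v) d -> e != d.+1.
Proof.
move=> /= /and4P[e_gt0 e_lt asc _] [_ _ _ suffix]; apply/eqP => e_def.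
have w_lo := nth_swap_at_lo v e_gt0; subst e.
by have := suffix d.+1; rewrite size_swap_at //= in w_lo *; rewrite w_lo nth_swap_at_hi; lia.
Qed.

Lemma suffix_min_descent_swap v e d : reduced_on v [:: e] ->
  suffix_min_descent (act [:: e] v) d -> e != d -> suffix_min_descent v d.
Proof.
move=> red smd e_ne_d; have /eqP e_ne := suffix_min_descent_swap_succ red smd.
move: red smd => /= /and4P[e_gt0 e_lt asc _] [d_gt0 d_lt desc suffix].
rewrite size_swap_at ?e_gt0 // in d_lt suffix.
have w_lo := nth_swap_at_lo v e_gt0; have w_hi := nth_swap_at_hi e v.
have w_other := nth_swap_at_other v (i := e).
have bot : nth 0 (swap_at e v) d = nth 0 v d by apply: w_other; lia.
split => //.
- case: (eqVneq e d.-1) => [e_def | e_ne'].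
    by move: desc; rewrite bot -e_def w_hi; lia.
  by rewrite -bot -w_other //; lia.
- move=> j j_in; rewrite -bot.
  case: (eqVneq j e.-1) => [j_e | j_ne]; first by subst j; rewrite -w_hi suffix //; lia.
  case: (eqVneq j e) => [j_e | j_ne']; first by subst j; rewrite -w_lo suffix //; lia.
  by rewrite -w_other ?suffix //; lia.
Qed.

Lemma suffix_min_descent_braid u e : reduced_on u [:: e.+1; e] ->
  suffix_min_descent (act [:: e.+1; e] u) e.+1 -> suffix_min_descent u e.
Proof.
move=> /= /and5P[e1_lt _ e_gt0 _ /andP[asc _]].
rewrite nth_swap_at_other ?nth_swap_at_lo // in asc; try lia.
have nthE k : nth 0 (swap_at e (swap_at e.+1 u)) k = nth 0 u
    (if k == e.-1 then e.+1 else if k == e then e.-1 else if k == e.+1 then e else k).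
  by rewrite !nth_swap_at; repeat case: eqP => ?; try (congr (nth _ _ _); lia); lia.
rewrite /suffix_min_descent /act /= !nthE !eqxx size_swap_at ?size_swap_at; try lia.
have [-> ->] : (e.+1 == e.-1) = false /\ (e.+1 == e) = false by lia.
have -> : (e == e.-1) = false by lia.
case=> _ _ desc suffix; split => //; [lia | move=> j j_in].
case: (eqVneq j e.+1) => [-> | j_ne]; first lia.
by have := suffix j; rewrite nthE (negbTE j_ne) !ifN_eq; lia.
Qed.

Definition has_braid (nb : rel nat) (a : seq nat) :=
  exists x y d e, nb d e /\ comm_eq a (x ++ [:: e; d; e] ++ y).

Lemma has_braid_catr nb a b y : comm_eq a (b ++ y) -> has_braid nb b -> has_braid nb a.
Proof.
move=> a_eq [x [z [d [e [nb_de b_eq]]]]]; exists x, (z ++ y), d, e; split => //.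
by apply: rt_trans a_eq _; have := comm_eq_catr y b_eq; rewrite -!catA.
Qed.

Lemma mem_des u i : (i \in des u) = (0 < i < size u) && (nth 0 u i < nth 0 u i.-1).
Proof.
rewrite /des mem_filter mem_iota andbC; congr (_ && _).
by case: (size u) => [|m] /=; lia.
Qed.

Lemma mem_des_last_letter u c e : reduced_on u (c ++ [:: e]) ->
  e \in des (act (c ++ [:: e]) u).
Proof.
rewrite reduced_on_cat act_cat /= => /andP[_ /and4P[e_gt0 e_lt asc _]].
by rewrite mem_des size_swap_at ?e_gt0 ?e_lt // nth_swap_at_hi nth_swap_at_lo.
Qed.

Lemma sort_steps_last_letter pick u c d : reduced_on u (c ++ [:: d]) ->
  pick (des (act (c ++ [:: d]) u)) = d ->
  sort_steps pick (size c).+1 (act (c ++ [:: d]) u) = d :: sort_steps pick (size c) (act c u).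
Proof.
rewrite reduced_on_cat act_cat /= => /andP[_ /and4P[d_gt0 d_lt _ _]] pick_d.
by rewrite pick_d swap_atK ?d_gt0.
Qed.

(* The argument shared by a_min and a_max: [cond w d] marks a descent [d] of
   [w] that must end some word of the commutation class of any reduced word of
   [w], unless a braid factor [e d e] with [nb d e] gets in the way. *)
Section SortingWords.

Variables (cond : seq nat -> nat -> Prop) (nb : rel nat).
Hypothesis nb_adjacent : forall d, nb d d.+1 || nb d.+1 d.
Hypothesis cond_iota : forall n d, ~ cond (iota 1 n) d.
Hypothesis cond_not_nb : forall v e d, reduced_on v [:: e] ->
  cond (act [:: e] v) d -> ~~ nb e d.
Hypothesis cond_swap : forall v e d, reduced_on v [:: e] ->
  cond (act [:: e] v) d -> e != d -> cond v d.
Hypothesis cond_braid : forall u d e, nb d e -> reduced_on u [:: d; e] ->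
  cond (act [:: d; e] u) d -> cond u e.

Lemma last_letter_or_braid n a d : reduced_on (iota 1 n) a ->
  cond (act a (iota 1 n)) d -> (exists c, comm_eq a (c ++ [:: d])) \/ has_braid nb a.
Proof.
have [N] := ubnP (size a); elim: N => // N IH in a d *.
case/lastP: a => [|c e]; first by move=> _ _ /cond_iota.
rewrite -cats1 size_cat addn1 ltnS => size_c.
rewrite reduced_on_cat act_cat => /andP[red_c red_e] cond_w.
have [-> | e_ne_d] := eqVneq e d; first by left; exists c; exact: rt_refl.
have [[c' c_eq] | ] := IH c d size_c red_c (cond_swap red_e cond_w e_ne_d); last first.
  by move=> br; right; apply: has_braid_catr (rt_refl _ _ _) br.
have [red_c' act_c'] := comm_eq_reduced_on c_eq red_c.
have a_eq : comm_eq (c ++ [:: e]) (c' ++ [:: d; e]).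
  by rewrite -[[:: d; e]]/([:: d] ++ [:: e]) catA; exact: comm_eq_catr.
have [nb_de | not_nb] := boolP (nb d e).
  move: red_c'; rewrite reduced_on_cat => /andP[red_c'' red_d].
  rewrite act_c' act_cat in red_e cond_w.
  have red_de : reduced_on (act c' (iota 1 n)) [:: d; e].
    by rewrite -[[:: d; e]]/([:: d] ++ [:: e]) reduced_on_cat red_d.
  have cond_e := cond_braid nb_de red_de cond_w.
  have size_c' : size c' < N by move: (comm_eq_size c_eq) size_c; rewrite size_cat addn1; lia.
  have [[c'' c'_eq] | br] := IH c' e size_c' red_c'' cond_e.
    right; exists c'', [::], d, e; split => //; rewrite cats0.
    by apply: rt_trans a_eq _; have := comm_eq_catr [:: d; e] c'_eq; rewrite -!catA.
  by right; apply: has_braid_catr a_eq br.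
left; exists (c' ++ [:: e]); apply: rt_trans a_eq _; rewrite -catA.
apply: rt_step; exists c', [::], d, e; split; last by rewrite !cats0.
have not_nb' := cond_not_nb red_e cond_w.
have : [|| e == d.+1, d == e.+1 | (d + 2 <= e) || (e + 2 <= d)] by lia.
case/or3P=> [/eqP e_def | /eqP d_def | //].
  by move: (nb_adjacent d); rewrite -e_def (negbTE not_nb) (negbTE not_nb').
by move: (nb_adjacent e); rewrite -d_def (negbTE not_nb) (negbTE not_nb').
Qed.

Variable pick : seq nat -> nat.
Hypothesis cond_pick : forall w, uniq w -> des w != [::] -> cond w (pick (des w)).

Lemma comm_eq_sort_word_or_braid n a : reduced_on (iota 1 n) a ->
  let w := act a (iota 1 n) in
  comm_eq a (rev (sort_steps pick (ninv w) w)) \/ has_braid nb a.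
Proof.
have [N] := ubnP (size a); elim: N => // N IH in a *.
case/lastP: a => [_ | c e]; first by left; rewrite /= ninv_iota; exact: rt_refl.
rewrite -cats1 size_cat addn1 ltnS => size_c red_a w.
have des_w : des w != [::].
  by apply/eqP => des_nil; have := mem_des_last_letter red_a; rewrite -/w des_nil.
have cond_w := cond_pick (reduced_on_uniq red_a (iota_uniq 1 n)) des_w.
have [[c' a_eq] | br] := last_letter_or_braid red_a cond_w; last by right.
have [red_c' act_c'] := comm_eq_reduced_on a_eq red_a.
have size_c' : size c' = size c by move: (comm_eq_size a_eq); rewrite !size_cat !addn1 => -[].
move: (red_c'); rewrite reduced_on_cat => /andP[red_c'' _].
have size_lt : size c' < N by rewrite size_c'.
have [c'_eq | br] := IH c' size_lt red_c''.
  left; apply: rt_trans a_eq _.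
  have ninv_w : ninv w = (size c').+1.
    by rewrite /w reduced_on_ninv // ninv_iota size_cat size_c' addn1.
  rewrite ninv_w /w act_c' sort_steps_last_letter -?act_c' // rev_cons -cats1.
  by rewrite reduced_on_ninv // ninv_iota in c'_eq; apply: comm_eq_catr.
by right; apply: has_braid_catr a_eq br.
Qed.

End SortingWords.

Lemma des_sorted u : sorted leq (des u).
Proof. exact: (sorted_filter leq_trans _ (iota_sorted _ _)). Qed.

Lemma head_des_min u x : x \in des u -> head 0 (des u) <= x.
Proof.
move=> x_in; rewrite -nth0 -{1}(nth_index 0 x_in).
have idx_lt : index x (des u) < size (des u) by rewrite index_mem.
by apply: (sorted_leq_nth leq_trans leqnn 0 (des_sorted u)); rewrite ?inE //; lia.
Qed.

Lemma last_des_max u x : x \in des u -> x <= last 0 (des u).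
Proof.
move=> x_in; rewrite -nth_last -{1}(nth_index 0 x_in).
have idx_lt : index x (des u) < size (des u) by rewrite index_mem.
by apply: (sorted_leq_nth leq_trans leqnn 0 (des_sorted u)); rewrite ?inE //; lia.
Qed.

Lemma nth_leq_chain (w : seq nat) j m :
  (forall k, j <= k < m -> nth 0 w k <= nth 0 w k.+1) -> j <= m -> nth 0 w j <= nth 0 w m.
Proof.
elim: m => [|m IH] step j_le; first by have -> : j = 0 by lia.
case: (eqVneq j m.+1) => [-> // | j_ne].
apply: (leq_trans (n := nth 0 w m)); last by apply: step; lia.
by apply: IH; [move=> k k_in; apply: step | ]; lia.
Qed.

Lemma prefix_max_descent_head (w : seq nat) : uniq w -> des w != [::] ->
  prefix_max_descent w (head 0 (des w)).
Proof.
move=> uniq_w des_w; set d := head 0 (des w).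
have d_in : d \in des w by rewrite /d; case: (des w) des_w => // ? ?; rewrite mem_head.
have d_min x : x \in des w -> d <= x by exact: head_des_min.
clearbody d.
move: (d_in); rewrite mem_des => /andP[/andP[d_gt0 d_lt] desc].
split => // j j_lt.
have no_des k : j <= k < d.-1 -> nth 0 w k <= nth 0 w k.+1.
  move=> k_in; have : k.+1 \notin des w by apply/negP => /d_min; lia.
  by rewrite mem_des /= ltnNge negb_and negbK => /orP[|//]; lia.
have [j_lt' d1_lt] : j < size w /\ d.-1 < size w by lia.
have : nth 0 w j != nth 0 w d.-1 by rewrite nth_uniq //; lia.
by have := nth_leq_chain no_des (ltnW j_lt); lia.
Qed.

Lemma suffix_min_descent_last (w : seq nat) : uniq w -> des w != [::] ->
  suffix_min_descent w (last 0 (des w)).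
Proof.
move=> uniq_w des_w; set d := last 0 (des w).
have d_in : d \in des w by rewrite /d; case: (des w) des_w => // ? ? _; exact: mem_last.
have d_max x : x \in des w -> x <= d by exact: last_des_max.
clearbody d.
move: (d_in); rewrite mem_des => /andP[/andP[d_gt0 d_lt] desc].
split => // j j_in.
have no_des k : d <= k < j -> nth 0 w k <= nth 0 w k.+1.
  move=> k_in; have : k.+1 \notin des w by apply/negP => /d_max; lia.
  by rewrite mem_des /= ltnNge negb_and negbK => /orP[|//]; lia.
have j_lt : j < size w by lia.
have : nth 0 w d != nth 0 w j by rewrite nth_uniq //; lia.
by have := nth_leq_chain no_des (ltnW (proj1 (andP j_in))); lia.
Qed.

Lemma amin_or_braid n a : reduced_on (iota 1 n) a ->
  comm_eq a (amin (act a (iota 1 n))) \/ has_braid (fun d e => e == d.+1) a.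
Proof.
apply: (comm_eq_sort_word_or_braid (cond := prefix_max_descent)).
- by move=> d; rewrite eqxx.
- exact: prefix_max_descent_iota.
- exact: prefix_max_descent_swap_pred.
- exact: prefix_max_descent_swap.
- by move=> u d e /eqP ->; apply: prefix_max_descent_braid.
- exact: prefix_max_descent_head.
Qed.

Lemma amax_or_braid n a : reduced_on (iota 1 n) a ->
  comm_eq a (amax (act a (iota 1 n))) \/ has_braid (fun d e => d == e.+1) a.
Proof.
apply: (comm_eq_sort_word_or_braid (cond := suffix_min_descent)).
- by move=> d; rewrite eqxx orbT.
- exact: suffix_min_descent_iota.
- exact: suffix_min_descent_swap_succ.
- exact: suffix_min_descent_swap.
- by move=> u d e /eqP ->; apply: suffix_min_descent_braid.
- exact: suffix_min_descent_last.
Qed.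

(** * Inversion triples *)

Lemma index_swap_at (u : seq nat) i x : uniq u -> 0 < i < size u -> x \in u ->
  index x (swap_at i u) =
  if index x u == i then i.-1 else if index x u == i.-1 then i else index x u.
Proof.
move=> uniq_u i_in x_in; have k_lt : index x u < size u by rewrite index_mem.
have uniq_s : uniq (swap_at i u) by rewrite (perm_uniq (perm_swap_at i_in)).
have i_gt0 : 0 < i by case/andP: i_in.
set k' := (X in index x _ = X).
have -> : x = nth 0 (swap_at i u) k'.
  rewrite /k' -{1}(nth_index 0 x_in).
  case: eqP => [-> | ne_i]; first by rewrite nth_swap_at_lo.
  case: eqP => [-> | ne_i']; first by rewrite nth_swap_at_hi.
  by rewrite nth_swap_at_other.
by rewrite index_uniq // size_swap_at // /k'; repeat case: ifP => _; lia.
Qed.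

Lemma index_swap_at_ltn (u : seq nat) i x y : uniq u -> 0 < i < size u ->
  nth 0 u i.-1 < nth 0 u i -> y < x -> y \in u ->
  index x u < index y u -> index x (swap_at i u) < index y (swap_at i u).
Proof.
move=> uniq_u i_in asc yx y_in xy_idx.
have x_in : x \in u by rewrite -index_mem (ltn_trans xy_idx) // index_mem.
have not_swapped : ~ (index x u = i.-1 /\ index y u = i).
  by case=> kx ky; move: asc; rewrite -kx -ky !nth_index //; lia.
by rewrite !index_swap_at //; repeat case: eqP => ?; lia.
Qed.

Lemma reduced_on_index_ltn a (u : seq nat) x y : reduced_on u a -> uniq u ->
  y < x -> y \in u -> index x u < index y u -> index x (act a u) < index y (act a u).
Proof.
elim: a u => [|i a IH] u //= /and4P[i_gt0 i_lt asc red] uniq_u yx y_in xy_idx.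
have i_in : 0 < i < size u by rewrite i_gt0.
apply: IH => //; first by rewrite (perm_uniq (perm_swap_at i_in)).
  by rewrite (perm_mem (perm_swap_at i_in)).
exact: index_swap_at_ltn.
Qed.

Lemma mem_steps_inversion a (u : seq nat) pr : reduced_on u a -> uniq u ->
  pr \in steps a u -> pr.1 < pr.2 /\ index pr.2 (act a u) < index pr.1 (act a u).
Proof.
elim: a u => [|i a IH] u //= /and4P[i_gt0 i_lt asc red] uniq_u.
have i_in : 0 < i < size u by rewrite i_gt0.
have uniq_s : uniq (swap_at i u) by rewrite (perm_uniq (perm_swap_at i_in)).
rewrite inE => /orP[/eqP -> /= | /IH]; last exact.
split => //; apply: reduced_on_index_ltn => //.
  by rewrite -nth_swap_at_hi mem_nth // size_swap_at.
rewrite -nth_swap_at_hi -(nth_swap_at_lo u i_gt0) !index_uniq ?size_swap_at //; lia.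
Qed.

Lemma find_ltn_cat_rev (T : Type) (p1 p2 : pred T) s1 m s2 :
  ~~ (has p1 m && has p2 m) ->
  (find p1 (s1 ++ rev m ++ s2) < find p2 (s1 ++ rev m ++ s2)) =
  (find p1 (s1 ++ m ++ s2) < find p2 (s1 ++ m ++ s2)).
Proof.
move=> not_both; rewrite !find_cat !has_rev size_rev.
have := has_find p1 m; have := has_find p2 m.
have := has_find p1 (rev m); have := has_find p2 (rev m); rewrite !has_rev size_rev.
have := has_find p1 s1; have := has_find p2 s1.
move: not_both; do 4 case: has => //=; lia.
Qed.

Definition swaps (p q : nat) (pr : nat * nat) := (pr == (p, q)) || (pr == (q, p)).

Lemma swaps_not_both (a b c d x y z : nat) : uniq [:: a; b; c; d] -> x < y < z ->
  ~~ (has (swaps z y) [:: (a, b); (c, d)] && has (swaps y x) [:: (a, b); (c, d)]).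
Proof. by rewrite /= /swaps !inE !xpair_eqE; lia. Qed.

Lemma GammaE n a x y z : Gamma n a (x, y, z) =
  (find (swaps z y) (steps a (iota 1 n)) < find (swaps y x) (steps a (iota 1 n))).
Proof. by []. Qed.

Lemma comm_step_Gamma n a b x y z : comm_step a b -> reduced_on (iota 1 n) a ->
  x < y < z -> Gamma n a (x, y, z) = Gamma n b (x, y, z).
Proof.
case=> x0 [y0 [i [j [far [-> ->]]]]] red_a xyz.
move: red_a; rewrite !GammaE !steps_cat !reduced_on_cat => /and3P[red_x red_ij _].
have [_ ->] := reduced_on_commute far red_ij.
have -> : act [:: j; i] (act x0 (iota 1 n)) = act [:: i; j] (act x0 (iota 1 n)).
  exact: swap_at_commute.
rewrite find_ltn_cat_rev //.
set v := act x0 (iota 1 n) in red_ij *.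
have uniq_v : uniq v by apply: reduced_on_uniq red_x (iota_uniq 1 n).
move: red_ij => /= /and4P[i_gt0 i_lt _ /and4P[j_gt0 j_lt _ _]].
rewrite size_swap_at ?i_gt0 // in j_lt.
rewrite !nth_swap_at_other; try lia.
apply: swaps_not_both xyz => /=.
have nthD k1 k2 : k1 < size v -> k2 < size v -> (nth 0 v k1 == nth 0 v k2) = (k1 == k2).
  by move=> k1_lt k2_lt; apply: nth_uniq.
by rewrite !inE !nthD; lia.
Qed.

Lemma comm_eq_sup n w a b : comm_eq a b -> reduced_on (iota 1 n) a ->
  sup n w a = sup n w b.
Proof.
elim=> [a' b' ab|//|a' b' c' ab IH1 _ IH2] red_a.
  by apply: eq_in_filter => -[[x y] z]; rewrite mem_filter => /andP[/and4P[xy yz _ _] _];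
     apply: comm_step_Gamma; rewrite ?xy.
by rewrite IH1 // IH2 //; have [] := comm_eq_reduced_on ab red_a.
Qed.

Lemma mem_Tw (w : seq nat) x y z : x \in w -> y \in w -> z \in w -> x < y -> y < z ->
  index z w < index y w -> index y w < index x w -> (x, y, z) \in Tw w.
Proof.
move=> xw yw zw xy yz zy_idx yx_idx; rewrite /Tw mem_filter xy yz zy_idx yx_idx /=.
apply/flatten_mapP; exists x => //; apply/flatten_mapP; exists y => //.
by apply/mapP; exists z.
Qed.

Lemma swap_at_cat_succ l x y z r :
  swap_at (size l).+2 (l ++ x :: y :: z :: r) = l ++ x :: z :: y :: r.
Proof. by have := swap_at_cat (l ++ [:: x]) y z r; rewrite -!catA size_cat addn1. Qed.

Lemma nth_cat_size l s k : nth 0 (l ++ s) (size l + k) = nth 0 s k.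
Proof. by rewrite nth_cat ltnNge leq_addr /= addKn. Qed.

Lemma braid_local l A B C r :
  let i := (size l).+1 in let v := l ++ [:: A, B, C & r] in
  [/\ reduced_on v [:: i.+1; i; i.+1] = [&& A < B, A < C & B < C],
      reduced_on v [:: i; i.+1; i] = [&& A < B, A < C & B < C],
      act [:: i.+1; i; i.+1] v = l ++ [:: C, B, A & r] /\
        act [:: i; i.+1; i] v = l ++ [:: C, B, A & r] &
      steps [:: i.+1; i; i.+1] v = [:: (B, C); (A, C); (A, B)] /\
        steps [:: i; i.+1; i] v = rev [:: (B, C); (A, C); (A, B)]].
Proof.
move=> i v; rewrite /i /v /=.
do 3 rewrite ?swap_at_cat_succ ?swap_at_cat.
have nthL0 s : nth 0 (l ++ s) (size l) = nth 0 s 0 by rewrite -[size l]addn0 nth_cat_size.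
rewrite -![(size l).+2]addn2 -![(size l).+1]addn1 !nth_cat_size !nthL0 !size_cat /=.
by split => //; apply/idP/idP; lia.
Qed.

Lemma braid_split v i : reduced_on v [:: i.+1; i; i.+1] || reduced_on v [:: i; i.+1; i] ->
  exists l A B C r, v = l ++ [:: A, B, C & r] /\ i = (size l).+1.
Proof.
move=> red_braid; have range j s : reduced_on v s -> j \in s -> 0 < j < size v.
  by move=> /reduced_on_range/allP; apply.
have [i_gt0 i_lt] : 0 < i /\ i.+1 < size v.
  case/orP: red_braid => red; move: (range i _ red) (range i.+1 _ red);
  by rewrite !inE !eqxx ?orbT => /(_ isT) ? /(_ isT) ?; lia.
exists (take i.-1 v), (nth 0 v i.-1), (nth 0 v i), (nth 0 v i.+1), (drop i.+2 v).
rewrite size_take ifT ?prednK //; last lia.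
split => //; rewrite -{1}(cat_take_drop i.-1 v); congr (_ ++ _).
have i1_lt : i.-1 < size v by lia.
by rewrite (drop_nth 0 i1_lt) prednK // (drop_nth 0 (ltnW i_lt)) (drop_nth 0 i_lt).
Qed.

Lemma reduced_on_braid u x y i :
  reduced_on u (x ++ [:: i.+1; i; i.+1] ++ y) = reduced_on u (x ++ [:: i; i.+1; i] ++ y) /\
  (reduced_on u (x ++ [:: i.+1; i; i.+1] ++ y) ->
   act (x ++ [:: i.+1; i; i.+1] ++ y) u = act (x ++ [:: i; i.+1; i] ++ y) u).
Proof.
rewrite !reduced_on_cat !act_cat.
set red_mid := reduced_on (act x u) [:: i.+1; i; i.+1] || reduced_on (act x u) [:: i; i.+1; i].
case: (boolP red_mid).
  case/braid_split=> l [A [B [C [r [-> ->]]]]].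
  by have [-> -> [-> ->] _] := braid_local l A B C r.
by case/norP=> /negbTE -> /negbTE ->; rewrite andbF.
Qed.

Lemma steps_swaps_inverted a (u : seq nat) p q : reduced_on u a -> uniq u -> p < q ->
  has (swaps q p) (steps a u) -> index q (act a u) < index p (act a u).
Proof.
move=> red uniq_u pq /hasP[pr /(mem_steps_inversion red uniq_u)[ordered inverted]].
by rewrite /swaps => /orP[] /eqP pr_eq; rewrite pr_eq /= in ordered inverted; lia.
Qed.

Lemma index_cat3 (l r : seq nat) x y z : uniq (l ++ [:: x, y, z & r]) ->
  [/\ index x (l ++ [:: x, y, z & r]) = size l,
      index y (l ++ [:: x, y, z & r]) = (size l).+1 &
      index z (l ++ [:: x, y, z & r]) = (size l).+2].
Proof.
rewrite cat_uniq => /and3P[_ disj uniq_xyz].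
have notin_l k : k \in [:: x, y, z & r] -> k \notin l.
  by move=> k_in; apply: contra disj => k_l; apply/hasP; exists k.
move: uniq_xyz => /= /and4P[]; rewrite !inE !negb_or => /and3P[xy xz _] /andP[yz _] _ _.
rewrite !index_cat !(negbTE (notin_l _ _)) ?inE ?eqxx ?orbT //= eqxx.
by rewrite (negbTE xy) (negbTE xz) (negbTE yz) !eqxx addn0 addn1 addn2.
Qed.

(* Reversing the block [m] only changes which of the pairs {z,y}, {y,x} is
   swapped first when both occur in [m], that is, for (x,y,z) = (A,B,C). *)
Lemma sup_rev_block n w a b S S' A B C : A < B -> B < C ->
  let m := [:: (B, C); (A, C); (A, B)] in
  steps a (iota 1 n) = S ++ m ++ S' -> steps b (iota 1 n) = S ++ rev m ++ S' ->
  ~~ has (swaps C B) S -> ~~ has (swaps B A) S -> (A, B, C) \in Tw w ->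
  strict_subset (sup n w b) (sup n w a).
Proof.
move=> AB BC m steps_a steps_b fresh_CB fresh_BA ABC_Tw.
have AC := ltn_trans AB BC.
have neqs := (ltn_eqF AB, ltn_eqF AC, ltn_eqF BC, gtn_eqF AB, gtn_eqF AC, gtn_eqF BC).
have Gamma_a : Gamma n a (A, B, C).
  rewrite GammaE steps_a !find_cat (negbTE fresh_CB) (negbTE fresh_BA).
  by rewrite /= /swaps !xpair_eqE !eqxx !neqs /= ltn_add2l.
have Gamma_b : ~~ Gamma n b (A, B, C).
  rewrite GammaE steps_b !find_cat (negbTE fresh_CB) (negbTE fresh_BA).
  by rewrite /= /swaps !xpair_eqE !eqxx !neqs /= ltn_add2l.
have Gamma_other t : t \in Tw w -> t != (A, B, C) -> Gamma n b t = Gamma n a t.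
  case: t => [[x y] z]; rewrite mem_filter => /andP[/and4P[xy yz _ _] _] t_ne.
  rewrite !GammaE steps_a steps_b find_ltn_cat_rev //.
  by move: t_ne; rewrite /= /swaps !xpair_eqE; lia.
split.
  move=> t; rewrite !(mem_filter (Gamma n _)) => /andP[Gb Tt]; rewrite Tt andbT.
  case: (eqVneq t (A, B, C)) => [t_eq | t_ne]; first by rewrite t_eq (negbTE Gamma_b) in Gb.
  by rewrite -(Gamma_other t Tt t_ne).
move=> /(_ (A, B, C)); rewrite !(mem_filter (Gamma n _)) ABC_Tw Gamma_a.
by rewrite (negbTE Gamma_b) => /(_ isT).
Qed.

Lemma sup_braid n x y i :
  let a := x ++ [:: i.+1; i; i.+1] ++ y in let b := x ++ [:: i; i.+1; i] ++ y in
  reduced_on (iota 1 n) a ->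
  strict_subset (sup n (act a (iota 1 n)) b) (sup n (act a (iota 1 n)) a).
Proof.
move=> a b red_a; move: (red_a); rewrite !reduced_on_cat => /and3P[red_x red_mid red_y].
have [l [A [B [C [r [v_eq i_eq]]]]]] : exists l A B C r,
    act x (iota 1 n) = l ++ [:: A, B, C & r] /\ i = (size l).+1.
  by apply: braid_split; rewrite red_mid.
have [red_mE _ [act_m act_m'] [steps_a steps_b]] := braid_local l A B C r.
rewrite v_eq i_eq in red_mid red_y; rewrite act_m in red_y.
have uniq_v : uniq (l ++ [:: A, B, C & r]).
  by rewrite -v_eq; apply: reduced_on_uniq red_x (iota_uniq 1 n).
have uniq_v' : uniq (l ++ [:: C, B, A & r]) by rewrite -act_m; apply: reduced_on_uniq.
have [iA iB iC] := index_cat3 uniq_v; have [jC jB jA] := index_cat3 uniq_v'.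
move: (red_mid); rewrite red_mE => /and3P[AB _ BC].
have fresh p q : q < p -> p \in [:: A; B; C] -> q \in [:: A; B; C] ->
    ~~ has (swaps p q) (steps x (iota 1 n)).
  move=> qp p_in q_in; apply/negP => /(steps_swaps_inverted red_x (iota_uniq 1 n) qp).
  rewrite v_eq; move: p_in q_in qp; rewrite !inE.
  by case/or3P=> /eqP-> /or3P[] /eqP->; rewrite ?iA ?iB ?iC; lia.
have mem_v' k : k \in [:: A; B; C] -> k \in l ++ [:: C, B, A & r].
  by rewrite mem_cat !inE => /or3P[] /eqP->; rewrite eqxx !orbT.
apply: (sup_rev_block (S := steps x (iota 1 n))
                      (S' := steps y (l ++ [:: C, B, A & r])) AB BC).
- by rewrite !steps_cat v_eq i_eq steps_a act_m.
- by rewrite !steps_cat v_eq i_eq steps_b act_m'.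
- by rewrite fresh ?inE ?eqxx ?orbT.
- by rewrite fresh ?inE ?eqxx ?orbT.
rewrite /a !act_cat v_eq i_eq act_m.
apply: mem_Tw; rewrite ?(perm_mem (reduced_on_perm red_y)) ?mem_v' ?inE ?eqxx ?orbT //.
  by apply: reduced_on_index_ltn; rewrite ?jB ?jC ?mem_v' ?inE ?eqxx ?orbT.
by apply: reduced_on_index_ltn; rewrite ?jA ?jB ?mem_v' ?inE ?eqxx ?orbT.
Qed.

Lemma reduced_of_reduced_on n w a : reduced_on (iota 1 n) a ->
  size a = ninv w -> act a (iota 1 n) = w -> reduced n w a.
Proof.
move=> red size_a act_a; split=> //.
by apply/allP => j /(allP (reduced_on_range red)); rewrite size_iota; lia.
Qed.

Lemma strict_subset_neq (s1 s2 : seq (nat * nat * nat)) : strict_subset s1 s2 -> s1 <> s2.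
Proof. by case=> _ not_sub eq_s; apply: not_sub; rewrite eq_s. Qed.

Lemma adjacent_braid_step n w a a' b : reduced_on (iota 1 n) b ->
  comm_eq a a' -> braid_step b a' -> sup n w b <> sup n w a -> adjacent b a.
Proof.
move=> red_b aa' ba' sup_ne; split; first by move=> ba; apply: sup_ne; apply: comm_eq_sup.
by exists b, a'; split; first exact: rt_refl.
Qed.

Lemma braid_move_shrinks_sup n w a x y i : reduced n w a ->
  comm_eq a (x ++ [:: i.+1; i; i.+1] ++ y) ->
  let b := x ++ [:: i; i.+1; i] ++ y in
  reduced n w b /\ adjacent b a /\ strict_subset (sup n w b) (sup n w a).
Proof.
move=> red a_eq b; have red_a := reduced_on_of_reduced red.
case: red => _ [size_a act_a].
have [red_a' act_a'] := comm_eq_reduced_on a_eq red_a.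
have [red_b act_b] := reduced_on_braid (iota 1 n) x y i.
have := sup_braid red_a'; rewrite -act_a' act_a -(comm_eq_sup w a_eq red_a) => sub.
split; [|split=> //].
  apply: reduced_of_reduced_on; rewrite -?red_b -?act_b -?act_a' //.
  by rewrite -size_a (comm_eq_size a_eq) !size_cat.
apply: adjacent_braid_step a_eq _ (strict_subset_neq sub); first by rewrite -red_b.
by exists x, y, i; left.
Qed.

Lemma braid_move_grows_sup n w a x y i : reduced n w a ->
  comm_eq a (x ++ [:: i; i.+1; i] ++ y) ->
  let b := x ++ [:: i.+1; i; i.+1] ++ y in
  reduced n w b /\ adjacent b a /\ strict_subset (sup n w a) (sup n w b).
Proof.
move=> red a_eq b; have red_a := reduced_on_of_reduced red.
case: red => _ [size_a act_a].
have [red_a' act_a'] := comm_eq_reduced_on a_eq red_a.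
have [red_b act_b] := reduced_on_braid (iota 1 n) x y i.
rewrite -red_b in red_a'.
have := sup_braid red_a'; rewrite act_b // -act_a' act_a -(comm_eq_sup w a_eq red_a) => sub.
split; [|split=> //].
  apply: reduced_of_reduced_on; rewrite ?act_b -?act_a' //.
  by rewrite -size_a (comm_eq_size a_eq) !size_cat.
apply: adjacent_braid_step a_eq _ (nesym (strict_subset_neq sub)) => //.
by exists x, y, i; right.
Qed.

Theorem mainTheorem6 (n : nat) (w a : seq nat) :
  is_perm n w -> reduced n w a ->
  (~ comm_eq a (amin w) ->
     exists b, reduced n w b /\ adjacent b a /\
               strict_subset (sup n w b) (sup n w a)) /\
  (~ comm_eq a (amax w) ->
     exists b, reduced n w b /\ adjacent b a /\
               strict_subset (sup n w a) (sup n w b)).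
Proof.
move=> _ red; have red_a := reduced_on_of_reduced red.
have act_a : act a (iota 1 n) = w by case: red => _ [].
split=> not_sorted.
- have [|[x [y [d [e [/eqP -> a_eq]]]]]] := amin_or_braid red_a; first by rewrite act_a.
  by eexists; apply: braid_move_shrinks_sup red a_eq.
- have [|[x [y [d [e [/eqP -> a_eq]]]]]] := amax_or_braid red_a; first by rewrite act_a.
  by eexists; apply: braid_move_grows_sup red a_eq.
Qed.
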